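(* Let $X$ be a topological space and $K$, $L$ complete non-Archimedean valued fields (not necessarily containing a common subfield, e.g. $\mathbb Q_p$ and $\mathbb Q_l$). Then there exists a unique homeomorphism $\mathrm{BSC}_K(X)\cong\mathrm{BSC}_L(X)$ compatible with the evaluation maps from $X$. In particular, for an extension $K/k$ of complete valued fields, the map $\mathrm{BSC}_K(X)\to\mathrm{BSC}_k(X)$ induced by restriction along the inclusion $C_{bd}(X,k)\hookrightarrow C_{bd}(X,K)$ is a homeomorphism.
   Context: Complete valued fields are fields complete with respect to a non-Archimedean absolute value of rank one (possibly trivial). $C_{bd}(X,k)$ is the $k$-algebra of bounded continuous functions $X\to k$ with the supremum norm. $\mathrm{BSC}_k(X)$ is the Berkovich spectrum of $C_{bd}(X,k)$: bounded multiplicative seminorms on it extending $|\cdot|$ on $k$, with the weakest topology making all $x\mapsto|f|_x$ continuous; the evaluation map is $X\to\mathrm{BSC}_k(X)$, $x\mapsto(f\mapsto|f(x)|)$. *)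

From HB Require Import structures.
From mathcomp Require Import all_boot all_algebra.
From Stdlib Require Import Reals List.
Set Implicit Arguments. Unset Strict Implicit. Unset Printing Implicit Defensive.

Local Open Scope R_scope.

Definition is_topology (X : Type) (op : (X -> Prop) -> Prop) : Prop :=
  op (fun _ => True) /\
  (forall U V, op U -> op V -> op (fun x => U x /\ V x)) /\
  (forall (I : Type) (F : I -> X -> Prop), (forall i, op (F i)) ->
      op (fun x => exists i, F i x)).

(** A non-Archimedean absolute value (real valued, i.e. of rank one, possibly trivial). *)
Definition is_nonarch_abs (K : fieldType) (abs : K -> R) : Prop :=
  (forall x, 0 <= abs x) /\
  (forall x, abs x = 0 <-> x = GRing.zero) /\
  (forall x y, abs (GRing.mul x y) = abs x * abs y) /\
  (forall x y, abs (GRing.add x y) <= Rmax (abs x) (abs y)).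

Definition abs_dist (K : fieldType) (abs : K -> R) (x y : K) : R :=
  abs (GRing.add x (GRing.opp y)).

Definition is_complete_abs (K : fieldType) (abs : K -> R) : Prop :=
  forall u : nat -> K,
    (forall eps, 0 < eps -> exists N, forall m n, (N <= m)%nat -> (N <= n)%nat ->
        abs_dist abs (u m) (u n) < eps) ->
    exists l, forall eps, 0 < eps -> exists N, forall n, (N <= n)%nat ->
        abs_dist abs (u n) l < eps.

Definition complete_nonarch_field (K : fieldType) (abs : K -> R) : Prop :=
  is_nonarch_abs abs /\ is_complete_abs abs.

(** Bounded continuous functions X -> K (open balls form a basis of K). *)
Definition is_cbd (X : Type) (op : (X -> Prop) -> Prop) (K : fieldType) (abs : K -> R)
    (f : X -> K) : Prop :=
  (forall (a : K) (r : R), 0 < r -> op (fun x => abs_dist abs (f x) a < r)) /\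
  (exists B, forall x, abs (f x) <= B).

Definition Cbd (X : Type) (op : (X -> Prop) -> Prop) (K : fieldType) (abs : K -> R) :=
  { f : X -> K | is_cbd op abs f }.

(** Bounded multiplicative seminorms on C_bd(X,K) extending |.| on K
    (boundedness w.r.t. the sup norm: s f <= ||f||_sup). *)
Definition is_bsc_point (X : Type) (op : (X -> Prop) -> Prop) (K : fieldType) (abs : K -> R)
    (s : Cbd op abs -> R) : Prop :=
  (forall f, 0 <= s f) /\
  (forall f g h : Cbd op abs,
      (forall x, proj1_sig h x = GRing.add (proj1_sig f x) (proj1_sig g x)) ->
      s h <= s f + s g) /\
  (forall f g h : Cbd op abs,
      (forall x, proj1_sig h x = GRing.mul (proj1_sig f x) (proj1_sig g x)) ->
      s h = s f * s g) /\
  (forall (c : K) (h : Cbd op abs), (forall x, proj1_sig h x = c) -> s h = abs c) /\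
  (forall (h : Cbd op abs) (B : R), (forall x, abs (proj1_sig h x) <= B) -> s h <= B).

Definition BSC (X : Type) (op : (X -> Prop) -> Prop) (K : fieldType) (abs : K -> R) :=
  { s : Cbd op abs -> R | is_bsc_point s }.

(** Weakest topology making all s |-> |f|_s continuous: generated by the
    subbasis { s | a < |f|_s < b }. *)
Definition bsc_open (X : Type) (op : (X -> Prop) -> Prop) (K : fieldType) (abs : K -> R)
    (U : BSC op abs -> Prop) : Prop :=
  forall s, U s ->
    exists l : list (Cbd op abs * R * R),
      Forall (fun p => let '(f, a, b) := p in a < proj1_sig s f < b) l /\
      (forall t, Forall (fun p => let '(f, a, b) := p in a < proj1_sig t f < b) l -> U t).

Definition bsc_continuous (X : Type) (op : (X -> Prop) -> Prop)
    (K : fieldType) (absK : K -> R) (L : fieldType) (absL : L -> R)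
    (phi : BSC op absK -> BSC op absL) : Prop :=
  forall U, bsc_open U -> bsc_open (fun s => U (phi s)).

Definition bsc_homeomorphism (X : Type) (op : (X -> Prop) -> Prop)
    (K : fieldType) (absK : K -> R) (L : fieldType) (absL : L -> R)
    (phi : BSC op absK -> BSC op absL) : Prop :=
  exists psi : BSC op absL -> BSC op absK,
    (forall s, psi (phi s) = s) /\ (forall t, phi (psi t) = t) /\
    bsc_continuous phi /\ bsc_continuous psi.

Definition is_eval_at (X : Type) (op : (X -> Prop) -> Prop) (K : fieldType) (abs : K -> R)
    (x : X) (s : BSC op abs) : Prop :=
  forall f : Cbd op abs, proj1_sig s f = abs (proj1_sig f x).

Definition eval_compatible (X : Type) (op : (X -> Prop) -> Prop)
    (K : fieldType) (absK : K -> R) (L : fieldType) (absL : L -> R)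
    (phi : BSC op absK -> BSC op absL) : Prop :=
  forall x s, is_eval_at x s -> is_eval_at x (phi s).

From HB Require Import structures.
From mathcomp Require Import all_boot all_algebra.
From Stdlib Require Import Reals List Lra.
From Stdlib Require Import Classical ClassicalEpsilon FunctionalExtensionality PropExtensionality ProofIrrelevance.
From Coquelicot Require Import Hierarchy Rbar Lim_seq.
Import GRing.Theory.

Set Implicit Arguments. Unset Strict Implicit.

(** For a field K with a non-Archimedean absolute
   value, a point s of BSC_K(X) singles out the clopen sets U of X whose
   indicator function has norm 1 ([ufilter]).  Since an indicator is
   idempotent and 1 = 1_U + 1_(X\U), these sets form an ultrafilter of the
   Boolean algebra of clopen sets; they generate a proper filter [near s] on X.

   1. The absolute value being ultrametric, the level sets {|g| < r}, r > 0,
      of every g in C_bd(X,K) are clopen, and |g|_s is the limit of |g(x)|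
      along [near s] ([lim_bsc]); the proof multiplies g by its truncated
      inverse, resp. by the indicator of {|g| < r}.
   2. For a second field L, every g in C_bd(X,L) also has clopen level sets,
      so |g(x)| has a limit along [near s]; these limits are the values of a
      point [transport s] of BSC_L(X) with the same clopen ultrafilter as s
      ([ufilter_transport]).  Hence transporting back inverts [transport],
      which is continuous (membership of a clopen set in the ultrafilter is
      a subbasic open condition) and maps evaluations to evaluations.
   3. Evaluation points are dense, so continuous maps compatible with the
      evaluations are unique ([eval_compatible_unique]).
   The restriction map of the second statement is [transport] from K to k,
   by step 1. *)

Delimit Scope ring_scope with ring.
Local Open Scope R_scope.

Local Notation ap f := (@proj1_sig _ _ f).

Section NonArchimedeanAbs.
Variables (K : fieldType) (abs : K -> R).
Hypothesis hK : is_nonarch_abs abs.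

Lemma abs_ge0 x : 0 <= abs x. Proof. exact: (proj1 hK x). Qed.
Lemma abs_eq0 x : abs x = 0 <-> x = 0%ring. Proof. exact: (proj1 (proj2 hK) x). Qed.
Lemma absM x y : abs (x * y)%ring = abs x * abs y. Proof. exact: (proj1 (proj2 (proj2 hK))). Qed.
Lemma abs_ultra x y : abs (x + y)%ring <= Rmax (abs x) (abs y).
Proof. exact: (proj2 (proj2 (proj2 hK))). Qed.

Lemma abs0 : abs 0%ring = 0. Proof. exact/abs_eq0. Qed.

Lemma abs_gt0 x : x <> 0%ring -> 0 < abs x.
Proof. move=> nz; have := abs_ge0 x; have : abs x <> 0 by move/abs_eq0.
  lra.
Qed.

Lemma abs1 : abs 1%ring = 1.
Proof.
  have e := absM 1 1; rewrite mulr1 in e.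
  have pos : 0 < abs 1%ring := abs_gt0 (elimN eqP (oner_neq0 K)).
  by apply: (Rmult_eq_reg_l (abs 1%ring)); [rewrite Rmult_1_r -e | lra].
Qed.

Lemma absN x : abs (- x)%ring = abs x.
Proof.
  have e := absM (-1) (-1); rewrite mulrNN mulr1 abs1 in e.
  have e1 : abs (-1)%ring = 1.
  { have := abs_ge0 (-1); move: e; move: (abs (-1)%ring) => a e ha.
    have : (a - 1) * (a + 1) = 0 by lra.
    case/Rmult_integral; lra. }
  by rewrite -mulN1r absM e1 Rmult_1_l.
Qed.

Lemma absV x : x <> 0%ring -> abs (x^-1)%ring = / abs x.
Proof.
  move=> nz; have e := absM x (x^-1); rewrite mulfV ?abs1 in e; last exact/eqP.
  have := abs_gt0 nz => ?; apply: (Rmult_eq_reg_l (abs x)); last lra.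
  by rewrite -e Rinv_r //; lra.
Qed.

Lemma dist_ge0 a b : 0 <= abs_dist abs a b. Proof. exact: abs_ge0. Qed.
Lemma dist_self a : abs_dist abs a a = 0. Proof. by rewrite /abs_dist subrr abs0. Qed.
Lemma dist_0 a : abs_dist abs a 0 = abs a. Proof. by rewrite /abs_dist oppr0 addr0. Qed.
Lemma dist_sym a b : abs_dist abs a b = abs_dist abs b a.
Proof. by rewrite /abs_dist -absN opprB. Qed.

Lemma dist_ultra a b c : abs_dist abs a c <= Rmax (abs_dist abs a b) (abs_dist abs b c).
Proof.
  rewrite /abs_dist.
  have -> : (a - c = (a - b) + (b - c))%ring by rewrite addrA subrK.
  exact: abs_ultra.
Qed.

Lemma abs_eq_of_close a b : abs_dist abs a b < abs b -> abs a = abs b.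
Proof.
  move=> close.
  have := dist_ultra a b 0; have := dist_ultra b a 0.
  rewrite !dist_0 (dist_sym b a) /Rmax; repeat case: Rle_dec; lra.
Qed.

Lemma dist_mul a b c d :
  abs_dist abs (a * b)%ring (c * d)%ring
  <= Rmax (abs a * abs_dist abs b d) (abs_dist abs a c * abs d).
Proof.
  rewrite /abs_dist -!absM.
  have -> : (a * b - c * d = a * (b - d) + (a - c) * d)%ring.
  { by rewrite mulrBr mulrBl addrA subrK. }
  exact: abs_ultra.
Qed.

Lemma dist_inv a b : a <> 0%ring -> b <> 0%ring ->
  abs_dist abs (a^-1)%ring (b^-1)%ring = abs_dist abs a b / (abs a * abs b).
Proof.
  move=> /eqP a0 /eqP b0; rewrite /abs_dist.
  have -> : (a^-1 - b^-1 = (b - a) * (a^-1 * b^-1))%ring.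
  { by rewrite mulrBl mulrCA mulfV // mulr1 mulrA mulfV // mul1r. }
  rewrite absM absM !absV; try exact/eqP.
  by rewrite -absN opprB /Rdiv Rinv_mult.
Qed.
End NonArchimedeanAbs.

Section Topology.
Variables (X : Type) (op : (X -> Prop) -> Prop).
Hypothesis hop : is_topology op.

Definition clopen (U : X -> Prop) : Prop := op U /\ op (fun x => ~ U x).

Lemma open_ext U V : op U -> (forall x, U x <-> V x) -> op V.
Proof.
  move=> oU UV; suff -> : V = U by [].
  by apply: functional_extensionality => x; apply: propositional_extensionality; split; apply UV.
Qed.

Lemma open_local U :
  (forall x, U x -> exists V, op V /\ V x /\ forall y, V y -> U y) -> op U.
Proof.
  move=> loc; pose I := {V : X -> Prop | op V /\ forall y, V y -> U y}.
  have oI := proj2 (proj2 hop) I (fun i => proj1_sig i) (fun i => proj1 (proj2_sig i)).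
  apply: (open_ext oI) => x; split.
  - by case=> [[V [_ VU]] /= Vx]; exact: VU.
  - move=> Ux; have [V [oV [Vx VU]]] := loc x Ux.
    by exists (exist _ V (conj oV VU)).
Qed.

Lemma open_and U V : op U -> op V -> op (fun x => U x /\ V x).
Proof. exact: (proj1 (proj2 hop) U V). Qed.

Lemma clopen_ext U V : clopen U -> (forall x, U x <-> V x) -> clopen V.
Proof.
  move=> [oU cU] UV; split; first exact: open_ext oU UV.
  by apply: (open_ext cU) => x; split=> nU /UV.
Qed.

Lemma clopen_not U : clopen U -> clopen (fun x => ~ U x).
Proof.
  move=> [oU cU]; split=> //.
  by apply: (open_ext oU) => x; split=> [Ux nUx|/NNPP //]; apply: nUx.
Qed.

Lemma clopen_and U V : clopen U -> clopen V -> clopen (fun x => U x /\ V x).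
Proof.
  move=> [oU cU] [oV cV]; split; first exact: open_and.
  apply: open_local => x nUV; case: (classic (U x)) => Ux.
  - by exists (fun x => ~ V x); split=> //; split=> [Vx|y nVy []]; [apply: nUV|].
  - by exists (fun x => ~ U x); split=> //; split=> // y nUy [].
Qed.
End Topology.

Section BoundedContinuous.
Variables (X : Type) (op : (X -> Prop) -> Prop).
Hypothesis hop : is_topology op.
Variables (K : fieldType) (abs : K -> R).
Hypothesis hK : is_nonarch_abs abs.

Implicit Types (f g h : Cbd op abs).

(** Continuity of f may be checked pointwise: the preimage of a ball is then
    a neighbourhood of each of its points, by the ultrametric inequality. *)
Lemma cbd_local (f : X -> K) :
  (forall x rho, 0 < rho ->
     exists V, op V /\ V x /\ forall y, V y -> abs_dist abs (f y) (f x) < rho) ->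
  (exists B, forall x, abs (f x) <= B) -> is_cbd op abs f.
Proof.
  move=> cont bnd; split=> // a r r0.
  apply: (open_local hop) => x fx_a.
  have [V [oV [Vx near]]] := cont x r r0.
  exists V; split=> //; split=> // y Vy.
  apply: Rle_lt_trans (dist_ultra hK (f y) (f x) a) _.
  exact: Rmax_lub_lt (near y Vy) fx_a.
Qed.

Lemma cbd_ball g a r : 0 < r -> op (fun y => abs_dist abs (ap g y) a < r).
Proof. exact: (proj1 (proj2_sig g) a r). Qed.

Lemma cbd_bound g : exists B, 0 < B /\ forall x, abs (ap g x) <= B.
Proof.
  have [B gB] := proj2 (proj2_sig g).
  exists (Rmax B 0 + 1); split=> [|x]; first by have := Rmax_r B 0; lra.
  by have := gB x; have := Rmax_l B 0; lra.
Qed.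

Lemma cbd_eq g h : (forall x, ap g x = ap h x) -> g = h.
Proof.
  case: g h => [g pg] [h ph] /= gh.
  have e : g = h := functional_extensionality _ _ gh.
  by subst h; rewrite (proof_irrelevance _ pg ph).
Qed.

Definition cst (c : K) : Cbd op abs.
Proof.
  exists (fun _ => c); apply: cbd_local; last by exists (abs c) => _; lra.
  move=> x rho rho0; exists (fun _ => True); split; first exact: (proj1 hop).
  by split=> // y _; rewrite (dist_self hK).
Defined.

Lemma cmul_cbd f g : is_cbd op abs (fun x => ap f x * ap g x)%ring.
Proof.
  have [Bf [Bf0 fB]] := cbd_bound f; have [Bg [Bg0 gB]] := cbd_bound g.
  apply: cbd_local; last first.
  { exists (Bf * Bg) => x; rewrite (absM hK).
    by apply: Rmult_le_compat; auto using abs_ge0. }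
  move=> x rho rho0; pose B := Bf + Bg; pose d := rho / B.
  have d0 : 0 < d by apply: Rdiv_lt_0_compat; rewrite /B; lra.
  have dB : d * B = rho by rewrite /d; field; rewrite /B; lra.
  exists (fun y => abs_dist abs (ap f y) (ap f x) < d /\ abs_dist abs (ap g y) (ap g x) < d).
  split; first by apply: (open_and hop); apply: cbd_ball.
  split; first by rewrite !(dist_self hK).
  move=> y [dfy dgy]; apply: Rle_lt_trans (dist_mul hK _ _ _ _) _.
  have := dist_ge0 hK (ap f y) (ap f x); have := dist_ge0 hK (ap g y) (ap g x).
  have := fB y; have := gB x; rewrite /B in dB => *.
  apply: Rmax_lub_lt; nra.
Qed.

Definition cmul f g : Cbd op abs := exist _ _ (cmul_cbd f g).

Definition level_clopen (h : X -> R) : Prop :=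
  forall r, 0 < r -> clopen op (fun x => h x < r).

Lemma level_clopen_ge (h : X -> R) r : level_clopen h -> 0 < r -> clopen op (fun x => r <= h x).
Proof.
  move=> lc r0; apply: clopen_ext (clopen_not (lc r r0)) _ => x.
  by split; [apply: Rnot_lt_le | apply: Rle_not_lt].
Qed.

(** For an ultrametric absolute value, |g| is locally constant where it is nonzero. *)
Lemma abs_level_clopen g : level_clopen (fun x => abs (ap g x)).
Proof.
  move=> r r0; split.
  { by apply: open_ext (cbd_ball g 0 r0) _ => x; rewrite dist_0. }
  apply: (open_local hop) => x gx_r.
  exists (fun y => abs_dist abs (ap g y) (ap g x) < r); split; first exact: cbd_ball.
  split=> [|y close]; first by rewrite (dist_self hK).
  by rewrite (abs_eq_of_close hK (b := ap g x)); lra.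
Qed.

Definition is_indicator (h : X -> K) (U : X -> Prop) : Prop :=
  forall x, (U x -> h x = 1%ring) /\ (~ U x -> h x = 0%ring).

Lemma indicator_exists U : clopen op U -> exists h, is_indicator (ap h) U.
Proof.
  move=> [oU cU].
  pose ind x := if excluded_middle_informative (U x) then 1%ring else 0%ring : K.
  have ind_U : is_indicator ind U.
  { by move=> x; rewrite /ind; case: excluded_middle_informative. }
  suff ind_cbd : is_cbd op abs ind by exists (exist _ _ ind_cbd).
  apply: cbd_local; last first.
  { exists 1 => x; case: (classic (U x)) => Ux.
    - by rewrite (proj1 (ind_U x) Ux) (abs1 hK); lra.
    - by rewrite (proj2 (ind_U x) Ux) (abs0 hK); lra. }
  move=> x rho rho0; case: (classic (U x)) => Ux.
  - exists U; do 2 split=> //; move=> y Uy.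
    by rewrite (proj1 (ind_U y) Uy) (proj1 (ind_U x) Ux) (dist_self hK).
  - exists (fun x => ~ U x); do 2 split=> //; move=> y nUy.
    by rewrite (proj2 (ind_U y) nUy) (proj2 (ind_U x) Ux) (dist_self hK).
Qed.

Lemma indicator_clopen h U : is_indicator (ap h) U -> clopen op U.
Proof.
  move=> hU; split.
  - apply: open_ext (cbd_ball h 1 Rlt_0_1) _ => x; split=> [close|Ux].
    + apply: NNPP => nUx; move: close.
      by rewrite (proj2 (hU x) nUx) (dist_sym hK) dist_0 (abs1 hK); lra.
    + by rewrite (proj1 (hU x) Ux) (dist_self hK); lra.
  - apply: open_ext (cbd_ball h 0 Rlt_0_1) _ => x; split=> [small Ux|nUx].
    + by move: small; rewrite (proj1 (hU x) Ux) dist_0 (abs1 hK); lra.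
    + by rewrite (proj2 (hU x) nUx) (dist_self hK); lra.
Qed.

(** The truncated inverse of g: g(x)^-1 where r <= |g x| and 0 elsewhere.  It is
    continuous because |g| is locally constant on the clopen set {r <= |g|}. *)
Definition trunc_inv g (r : R) (x : X) : K :=
  if excluded_middle_informative (r <= abs (ap g x)) then ((ap g x)^-1)%ring else 0%ring.

Lemma trunc_inv_nz g r x : 0 < r -> r <= abs (ap g x) -> ap g x <> 0%ring.
Proof. by move=> r0 gx_r gx0; move: gx_r; rewrite gx0 (abs0 hK); lra. Qed.

Lemma abs_trunc_inv g r x : 0 < r -> abs (trunc_inv g r x) <= / r.
Proof.
  move=> r0; rewrite /trunc_inv; case: excluded_middle_informative => gx_r.
  - by rewrite (absV hK (trunc_inv_nz r0 gx_r)); apply: Rinv_le_contravar.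
  - by rewrite (abs0 hK); apply/Rlt_le/Rinv_0_lt_compat.
Qed.

Lemma trunc_inv_indicator g r : 0 < r ->
  is_indicator (fun x => ap g x * trunc_inv g r x)%ring (fun x => r <= abs (ap g x)).
Proof.
  move=> r0 x; rewrite /trunc_inv; case: excluded_middle_informative => gx_r; split=> //.
  - by move=> _; apply: mulfV; apply/eqP; exact: trunc_inv_nz gx_r.
  - by move=> _; rewrite mulr0.
Qed.

Lemma trunc_inv_cbd g r : 0 < r -> is_cbd op abs (trunc_inv g r).
Proof.
  move=> r0; apply: cbd_local; last by exists (/ r) => x; exact: abs_trunc_inv.
  move=> x rho rho0; rewrite /trunc_inv.
  case: excluded_middle_informative => gx_r; last first.
  { exists (fun y => abs (ap g y) < r); split; first exact: (proj1 (abs_level_clopen g r0)).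
    split=> [|y gy_r]; first lra.
    by case: excluded_middle_informative => ?; [lra | rewrite (dist_self hK)]. }
  pose a := abs (ap g x); have a0 : 0 < a by rewrite /a; lra.
  pose d := Rmin a (rho * (a * a)).
  have d0 : 0 < d by apply: Rmin_pos => //; apply: Rmult_lt_0_compat => //; nra.
  exists (fun y => abs_dist abs (ap g y) (ap g x) < d).
  split; first exact: cbd_ball.
  split=> [|y close]; first by rewrite (dist_self hK).
  have gy_a : abs (ap g y) = a.
  { by apply: (abs_eq_of_close hK); have := Rmin_l a (rho * (a * a)); rewrite -/d -/a; lra. }
  case: excluded_middle_informative => gy_r; last by case: gy_r; rewrite gy_a.
  rewrite (dist_inv hK (trunc_inv_nz r0 gy_r) (trunc_inv_nz r0 gx_r)) gy_a -/a.
  have := Rmin_r a (rho * (a * a)); rewrite -/d => d_le.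
  apply: (Rmult_lt_reg_r (a * a)); first nra.
  by rewrite /Rdiv Rmult_assoc Rinv_l; nra.
Qed.

Definition cinv g r (r0 : 0 < r) : Cbd op abs := exist _ _ (trunc_inv_cbd g r0).
End BoundedContinuous.

Lemma bsc_eq X (op : (X -> Prop) -> Prop) (K : fieldType) (abs : K -> R) (s t : BSC op abs) :
  (forall f, ap s f = ap t f) -> s = t.
Proof.
  case: s t => [s ps] [t pt] /= st.
  have e : s = t := functional_extensionality _ _ st.
  by subst t; rewrite (proof_irrelevance _ ps pt).
Qed.

Definition strip X (op : (X -> Prop) -> Prop) (K : fieldType) (abs : K -> R)
    (t : BSC op abs) (p : Cbd op abs * R * R) : Prop :=
  let '(f, a, b) := p in a < ap t f < b.

Section ClopenUltrafilter.
Variables (X : Type) (op : (X -> Prop) -> Prop).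
Hypothesis hop : is_topology op.
Variables (K : fieldType) (abs : K -> R).
Hypothesis hK : is_nonarch_abs abs.
Variable s : BSC op abs.

Implicit Types (f g h : Cbd op abs) (U V : X -> Prop).

Lemma bsc_ge0 f : 0 <= ap s f.
Proof. exact: (proj1 (proj2_sig s) f). Qed.
Lemma bsc_add f g h : (forall x, ap h x = ap f x + ap g x)%ring -> ap s h <= ap s f + ap s g.
Proof. exact: (proj1 (proj2 (proj2_sig s)) f g h). Qed.
Lemma bsc_mul f g h : (forall x, ap h x = ap f x * ap g x)%ring -> ap s h = ap s f * ap s g.
Proof. exact: (proj1 (proj2 (proj2 (proj2_sig s))) f g h). Qed.
Lemma bsc_cst c h : (forall x, ap h x = c) -> ap s h = abs c.
Proof. exact: (proj1 (proj2 (proj2 (proj2 (proj2_sig s)))) c h). Qed.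
Lemma bsc_bnd h B : (forall x, abs (ap h x) <= B) -> ap s h <= B.
Proof. exact: (proj2 (proj2 (proj2 (proj2 (proj2_sig s)))) h B). Qed.

Definition ufilter U : Prop := exists h, is_indicator (ap h) U /\ ap s h = 1.

Lemma indicator_unique g h U : is_indicator (ap g) U -> is_indicator (ap h) U -> g = h.
Proof.
  move=> gU hU; apply: cbd_eq => x; case: (classic (U x)) => Ux.
  - by rewrite (proj1 (gU x) Ux) (proj1 (hU x) Ux).
  - by rewrite (proj2 (gU x) Ux) (proj2 (hU x) Ux).
Qed.

(** An indicator is idempotent, so its norm is 0 or 1. *)
Lemma indicator_01 h U : is_indicator (ap h) U -> ap s h = 0 \/ ap s h = 1.
Proof.
  move=> hU; have idem : ap s h = ap s h * ap s h.
  { apply: bsc_mul => x; case: (classic (U x)) => Ux.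
    - by rewrite (proj1 (hU x) Ux) mulr1.
    - by rewrite (proj2 (hU x) Ux) mulr0. }
  have : ap s h * (ap s h - 1) = 0 by lra.
  by case/Rmult_integral; lra.
Qed.

Lemma ufilter_indicator h U : ufilter U -> is_indicator (ap h) U -> ap s h = 1.
Proof. by move=> [g [gU sg]] hU; rewrite -(indicator_unique gU hU). Qed.

Lemma ufilter_clopen U : ufilter U -> clopen op U.
Proof. by move=> [h [hU _]]; exact: indicator_clopen hU. Qed.

Lemma ufilter_nonempty U : ufilter U -> exists x, U x.
Proof.
  move=> [h [hU sh]]; apply: NNPP => empty.
  suff : ap s h = 0 by lra.
  rewrite (@bsc_cst 0%ring) ?(abs0 hK) // => x.
  by apply: (proj2 (hU x)) => Ux; apply: empty; exists x.
Qed.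

Lemma ufilter_True : ufilter (fun _ => True).
Proof.
  exists (cst hop hK 1%ring); split=> [x|]; first by split.
  by rewrite (@bsc_cst 1%ring) // (abs1 hK).
Qed.

Lemma ufilter_and U V : ufilter U -> ufilter V -> ufilter (fun x => U x /\ V x).
Proof.
  move=> uU uV; have [h hUV] := indicator_exists hop hK
    (clopen_and hop (ufilter_clopen uU) (ufilter_clopen uV)).
  have [[g [gU sg]] [k [kV sk]]] := (uU, uV).
  exists h; split=> //; rewrite (@bsc_mul g k h) ?sg ?sk ?Rmult_1_r // => x.
  case: (classic (U x)) => Ux; case: (classic (V x)) => Vx.
  - by rewrite (proj1 (hUV x)) // (proj1 (gU x)) // (proj1 (kV x)) // mulr1.
  - by rewrite (proj2 (hUV x)) ?(proj2 (kV x)) ?mulr0 //; case.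
  - by rewrite (proj2 (hUV x)) ?(proj2 (gU x)) ?mul0r //; case.
  - by rewrite (proj2 (hUV x)) ?(proj2 (gU x)) ?mul0r //; case.
Qed.

Lemma ufilter_mono U V : ufilter U -> (forall x, U x -> V x) -> clopen op V -> ufilter V.
Proof.
  move=> [g [gU sg]] UV cV; have [h hV] := indicator_exists hop hK cV.
  exists h; split=> //.
  have : ap s g = ap s g * ap s h.
  { apply: bsc_mul => x; case: (classic (U x)) => Ux.
    - by rewrite (proj1 (gU x) Ux) (proj1 (hV x) (UV x Ux)) mulr1.
    - by rewrite (proj2 (gU x) Ux) mul0r. }
  by rewrite sg; lra.
Qed.

(** Ultrafilter property: since 1 = 1_U + 1_(~U), one of the two has norm 1. *)
Lemma ufilter_dich U : clopen op U -> ufilter U \/ ufilter (fun x => ~ U x).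
Proof.
  move=> cU; have [g gU] := indicator_exists hop hK cU.
  have [h hnU] := indicator_exists hop hK (clopen_not cU).
  have sum : 1 <= ap s g + ap s h.
  { rewrite -(abs1 hK) -(@bsc_cst 1%ring (cst hop hK 1%ring)) //.
    apply: bsc_add => x /=; case: (classic (U x)) => Ux.
    - by rewrite (proj1 (gU x) Ux) (proj2 (hnU x)) ?addr0.
    - by rewrite (proj2 (gU x) Ux) (proj1 (hnU x)) ?add0r. }
  case: (indicator_01 gU) => sg; last by left; exists g.
  right; exists h; split=> //; case: (indicator_01 hnU); lra.
Qed.

(** Membership of a clopen set in the ultrafilter is a subbasic open condition on [s]. *)
Lemma ufilter_strip h U : is_indicator (ap h) U -> ufilter U <-> strip s (h, 1/2, 2).
Proof.
  move=> hU; split=> [uU|/= [lo hi]]; first by rewrite /= (ufilter_indicator uU hU); lra.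
  by exists h; split=> //; case: (indicator_01 hU); lra.
Qed.

Definition near (P : X -> Prop) : Prop := exists U, ufilter U /\ forall x, U x -> P x.

Lemma near_imp P Q : near P -> (forall x, P x -> Q x) -> near Q.
Proof. by move=> [U [uU UP]] PQ; exists U; split=> // x /UP /PQ. Qed.

Lemma near_and P Q : near P -> near Q -> near (fun x => P x /\ Q x).
Proof.
  move=> [U [uU UP]] [V [uV VQ]]; exists (fun x => U x /\ V x).
  by split=> [|x [Ux Vx]]; [exact: ufilter_and | split; [exact: UP | exact: VQ]].
Qed.

Lemma near_forall (P : X -> Prop) : (forall x, P x) -> near P.
Proof. by move=> allP; exists (fun _ => True); split=> [|x _]; [exact: ufilter_True | exact: allP]. Qed.

Lemma near_ex P : near P -> exists x, P x.
Proof. by move=> [U [/ufilter_nonempty [x Ux] UP]]; exists x; exact: UP. Qed.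

Lemma near_proper : ProperFilter' near.
Proof.
  split; first by move/near_ex => [].
  by split; [exact: near_forall | exact: near_and | move=> P Q PQ /near_imp; apply].
Qed.

Lemma near_ufilter U : clopen op U -> near U -> ufilter U.
Proof. by move=> cU [V [uV VU]]; exact: ufilter_mono uV VU cU. Qed.

Lemma near_dich U : clopen op U -> near U \/ near (fun x => ~ U x).
Proof.
  case/ufilter_dich=> [uU|unU]; [left; exists U | right; exists (fun x => ~ U x)]; by split.
Qed.
End ClopenUltrafilter.

Section RealLimits.
Context {T : Type} {F : (T -> Prop) -> Prop}.

Lemma lim_plus {FF : Filter F} (f g : T -> R) a b :
  filterlim f F (locally a) -> filterlim g F (locally b) ->
  filterlim (fun x => f x + g x) F (locally (a + b)).
Proof. by move=> fa gb; apply: (filterlim_comp_2 f g Rplus fa gb (@filterlim_plus _ R_NormedModule a b)). Qed.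

Lemma lim_mult {FF : Filter F} (f g : T -> R) a b :
  filterlim f F (locally a) -> filterlim g F (locally b) ->
  filterlim (fun x => f x * g x) F (locally (a * b)).
Proof. by move=> fa gb; apply: (filterlim_comp_2 f g Rmult fa gb (@filterlim_mult R_AbsRing a b)). Qed.

Lemma lim_unique {FF : ProperFilter' F} (f : T -> R) a b :
  filterlim f F (locally a) -> filterlim f F (locally b) -> a = b.
Proof. exact: (@filterlim_locally_unique _ R_AbsRing R_NormedModule F FF f a b). Qed.

Lemma lim_le {FF : ProperFilter' F} (f g : T -> R) a b :
  F (fun x => f x <= g x) -> filterlim f F (locally a) -> filterlim g F (locally b) -> a <= b.
Proof. exact: (filterlim_le f g a b). Qed.

Lemma lim_in_interval {FF : Filter F} (f : T -> R) v a b :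
  filterlim f F (locally v) -> a < v < b -> F (fun x => a < f x < b).
Proof.
  move=> fv [av vb]; have m0 : 0 < Rmin (v - a) (b - v) by apply: Rmin_pos; lra.
  apply: (filter_imp _ _ _ (proj1 (filterlim_locally f v) fv (mkposreal _ m0))) => x close.
  change (Rabs (f x - v) < Rmin (v - a) (b - v)) in close.
  have := Rabs_def2 _ _ close; have := Rmin_l (v - a) (b - v); have := Rmin_r (v - a) (b - v).
  lra.
Qed.

Lemma lim_between {FF : ProperFilter' F} (f : T -> R) v c d :
  filterlim f F (locally v) -> F (fun x => c <= f x <= d) -> c <= v <= d.
Proof.
  move=> fv cfd; have FF' : Filter F := filter_filter'.
  split.
  - apply: (lim_le _ (filterlim_const c) fv).
    exact: filter_imp (fun x => @proj1 _ _) cfd.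
  - apply: (lim_le _ fv (filterlim_const d)).
    exact: filter_imp (fun x => @proj2 _ _) cfd.
Qed.
End RealLimits.

Section LimitsAlongPoints.
Variables (X : Type) (op : (X -> Prop) -> Prop).
Hypothesis hop : is_topology op.
Variables (K : fieldType) (abs : K -> R).
Hypothesis hK : is_nonarch_abs abs.

#[local] Instance near_proper_inst (s : BSC op abs) : ProperFilter' (near s) :=
  near_proper hop hK s.
#[local] Instance near_filter_inst (s : BSC op abs) : Filter (near s) :=
  filter_filter'.

Implicit Types (s : BSC op abs) (g : Cbd op abs) (h : X -> R).

Lemma lim_of_levels s h v : (forall x, 0 <= h x) -> 0 <= v ->
  (forall r, 0 < r -> v < r -> near s (fun x => h x < r)) ->
  (forall r, 0 < r -> r < v -> near s (fun x => r <= h x)) ->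
  filterlim h (near s) (locally v).
Proof.
  move=> h0 v0 below above; apply/filterlim_locally => eps.
  have e0 := cond_pos eps.
  have lo : near s (fun x => v - eps < h x).
  { case: (Rlt_le_dec 0 (v - eps / 2)) => pos.
    - by apply: (near_imp (above _ pos ltac:(lra))) => x; lra.
    - by apply: (near_forall hop hK) => x; have := h0 x; lra. }
  apply: (near_imp (near_and hop hK lo (below (v + eps) ltac:(lra) ltac:(lra)))) => x [h_lo h_hi].
  change (Rabs (h x - v) < eps).
  by apply: Rabs_def1; lra.
Qed.

(** Every nonnegative bounded function with clopen level sets has a limit along
    [near s]; it is the supremum of the levels r such that eventually r <= h. *)
Lemma lim_exists s h : level_clopen op h -> (forall x, 0 <= h x) ->
  (exists B, forall x, h x <= B) -> exists v, filterlim h (near s) (locally v).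
Proof.
  move=> lc h0 [B hB].
  pose E r := r = 0 \/ (0 < r /\ near s (fun x => r <= h x)).
  have bE : bound E.
  { exists (Rmax B 0) => r [->|[_ /(near_ex hK) [x rh]]]; first exact: Rmax_r.
    by have := hB x; have := Rmax_l B 0; lra. }
  have [v [ub lub]] := completeness E bE (ex_intro _ 0 (or_introl erefl)).
  have v0 : 0 <= v by apply: ub; left.
  exists v; apply: lim_of_levels => // r r0 vr.
  - case: (near_dich hop hK s (lc r r0)) => // far; exfalso.
    suff : r <= v by lra.
    apply: ub; right; split=> //.
    by apply: (near_imp far) => x /Rnot_lt_le.
  - have [e [Ee re]] : exists e, E e /\ r < e.
    { apply: NNPP => none; suff : v <= r by lra.
      apply: lub => e Ee; apply: Rnot_lt_le => re; apply: none; by exists e. }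
    case: Ee => [e0|[_ near_e]]; first lra.
    by apply: (near_imp near_e) => x; lra.
Qed.
(** If |g|_s < r then eventually |g| < r: otherwise the indicator of {r <= |g|},
    which is g times its truncated inverse, would have norm <= |g|_s / r < 1. *)
Lemma bsc_below s g r : 0 < r -> ap s g < r -> near s (fun x => abs (ap g x) < r).
Proof.
  move=> r0 sg_r; have lc := abs_level_clopen hop hK g r0.
  case: (near_dich hop hK s lc) => // far; exfalso.
  have uW : ufilter s (fun x => r <= abs (ap g x)).
  { apply: (near_ufilter hop hK) (level_clopen_ge (abs_level_clopen hop hK g) r0) _.
    by apply: (near_imp far) => x /Rnot_lt_le. }
  pose k := cinv hop hK g r0.
  have one : ap s (cmul hop hK g k) = 1.
  { by apply: (ufilter_indicator uW); exact: trunc_inv_indicator. }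
  have sk : ap s k <= / r by apply: bsc_bnd => x; exact: abs_trunc_inv.
  have := bsc_ge0 s k; have := bsc_ge0 s g.
  rewrite (@bsc_mul _ _ _ _ s g k) // in one.
  have : r * / r = 1 by field; lra.
  have := Rinv_0_lt_compat r r0; nra.
Qed.

(** If r < |g|_s then eventually r <= |g|: otherwise g = g * 1_{|g| < r}
    in norm, and |g 1_{|g| < r}| <= r. *)
Lemma bsc_above s g r : 0 < r -> r < ap s g -> near s (fun x => r <= abs (ap g x)).
Proof.
  move=> r0 r_sg; have lc := abs_level_clopen hop hK g r0.
  case: (near_dich hop hK s lc) => far.
  - exfalso; have [u [uU su]] := near_ufilter hop hK lc far.
    suff : ap s (cmul hop hK g u) <= r by rewrite (@bsc_mul _ _ _ _ s g u) // su; lra.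
    apply: bsc_bnd => x /=; case: (classic (abs (ap g x) < r)) => gx_r.
    + by rewrite (proj1 (uU x) gx_r) mulr1; lra.
    + by rewrite (proj2 (uU x) gx_r) mulr0 (abs0 hK); lra.
  - by apply: (near_imp far) => x /Rnot_lt_le.
Qed.

Lemma lim_bsc s g : filterlim (fun x => abs (ap g x)) (near s) (locally (ap s g)).
Proof.
  apply: lim_of_levels; [move=> x; exact: abs_ge0 | exact: bsc_ge0 | |].
  - by move=> r r0; exact: bsc_below.
  - by move=> r r0; exact: bsc_above.
Qed.

Lemma eval_ufilter x s U : is_eval_at x s -> clopen op U -> U x -> ufilter s U.
Proof.
  move=> ev cU Ux; have [h hU] := indicator_exists hop hK cU.
  by exists h; split=> //; rewrite ev (proj1 (hU x) Ux) (abs1 hK).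
Qed.

Lemma lim_eval x s h : is_eval_at x s -> level_clopen op h -> (forall y, 0 <= h y) ->
  filterlim h (near s) (locally (h x)).
Proof.
  move=> ev lc h0; apply: lim_of_levels => // r r0 r_x.
  - by exists (fun y => h y < r); split=> //; exact: eval_ufilter ev (lc r r0) r_x.
  - exists (fun y => r <= h y); split=> //.
    by apply: (eval_ufilter ev (level_clopen_ge lc r0)); lra.
Qed.
End LimitsAlongPoints.
(** [s] and [g] cannot be inferred from a limit statement. *)
Arguments lim_bsc {X op} hop {K abs} hK s g P _.

Section Transport.
Variables (X : Type) (op : (X -> Prop) -> Prop).
Hypothesis hop : is_topology op.
Variables (K : fieldType) (absK : K -> R) (L : fieldType) (absL : L -> R).
Hypotheses (hK : is_nonarch_abs absK) (hL : is_nonarch_abs absL).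

#[local] Instance near_proper_transport (s : BSC op absK) : ProperFilter' (near s) :=
  near_proper hop hK s.
#[local] Instance near_filter_transport (s : BSC op absK) : Filter (near s) :=
  filter_filter'.

Implicit Types (s : BSC op absK) (f g h : Cbd op absL).

Lemma transport_ex s g : exists v, filterlim (fun x => absL (ap g x)) (near s) (locally v).
Proof.
  apply: (lim_exists hop hK); first exact: abs_level_clopen.
  - by move=> x; exact: abs_ge0.
  - by have [B [_ gB]] := cbd_bound g; exists B.
Qed.

Definition transport_val s g : R :=
  proj1_sig (constructive_indefinite_description _ (transport_ex s g)).

Lemma transport_lim s g :
  filterlim (fun x => absL (ap g x)) (near s) (locally (transport_val s g)).
Proof. exact: (proj2_sig (constructive_indefinite_description _ (transport_ex s g))). Qed.
(** [s] and [g] cannot be inferred from a limit statement. *)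
Arguments transport_lim : clear implicits.

Lemma transport_valE s g v :
  filterlim (fun x => absL (ap g x)) (near s) (locally v) -> transport_val s g = v.
Proof. exact: lim_unique (transport_lim s g). Qed.

Lemma transport_point s : is_bsc_point (transport_val s).
Proof.
  have bounded h B : (forall x, absL (ap h x) <= B) -> 0 <= transport_val s h <= B.
  { move=> hB; apply: (lim_between (transport_lim s h)); apply: (near_forall hop hK) => x.
    by split; [exact: abs_ge0 | exact: hB]. }
  split; [|split; [|split; [|split]]].
  - move=> h; have [B [_ hB]] := cbd_bound h; exact: proj1 (bounded h B hB).
  - move=> f g h fgh; apply: (lim_le _ (transport_lim s h) (lim_plus (transport_lim s f) (transport_lim s g))).
    apply: (near_forall hop hK) => x; rewrite fgh; apply: Rle_trans (abs_ultra hL _ _) _.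
    by apply: Rmax_lub; have := abs_ge0 hL (ap f x); have := abs_ge0 hL (ap g x); lra.
  - move=> f g h fgh; apply: transport_valE.
    apply: filterlim_ext (lim_mult (transport_lim s f) (transport_lim s g)) => x.
    by rewrite fgh (absM hL).
  - move=> c h hc; apply: transport_valE.
    by apply: filterlim_ext (filterlim_const (absL c)) => x; rewrite hc.
  - by move=> h B hB; exact: proj2 (bounded h B hB).
Qed.

Definition transport s : BSC op absL := exist _ _ (transport_point s).

Lemma transport_near_const s h c : near s (fun x => ap h x = c) -> transport_val s h = absL c.
Proof.
  move=> hc; apply: transport_valE.
  apply: (filterlim_ext_loc (fun _ => absL c)); last exact: filterlim_const.
  by apply: (near_imp hc) => x ->.
Qed.

Lemma ufilter_transport s W : clopen op W -> (ufilter (transport s) W <-> ufilter s W).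
Proof.
  move=> cW; have [h hW] := indicator_exists hop hL cW.
  have on_W : ufilter s W -> transport_val s h = 1.
  { move=> uW; rewrite -(abs1 hL) ; apply: transport_near_const.
    by exists W; split=> // x /(proj1 (hW x)). }
  split=> [uW|uW]; last by exists h; split=> //; exact: on_W.
  case: (ufilter_dich hop hK s cW) => // unW; exfalso.
  have : transport_val s h = 0.
  { rewrite -(abs0 hL); apply: transport_near_const.
    by exists (fun x => ~ W x); split=> // x /(proj2 (hW x)). }
  by rewrite [transport_val s h](ufilter_indicator uW hW); lra.
Qed.

Lemma near_transport s : near (transport s) = near s.
Proof.
  apply: functional_extensionality => P; apply: propositional_extensionality.
  split=> [[U [uU UP]]|[U [uU UP]]]; exists U; split=> //.
  - by apply/(ufilter_transport s (ufilter_clopen hL uU)).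
  - by apply/(ufilter_transport s (ufilter_clopen hK uU)).
Qed.

Lemma transport_val_abs s g (f : Cbd op absK) :
  (forall x, absL (ap g x) = absK (ap f x)) -> transport_val s g = ap s f.
Proof.
  move=> gf; apply: transport_valE.
  by apply: filterlim_ext (lim_bsc hop hK s f) => x; rewrite gf.
Qed.

Lemma transport_eval : eval_compatible transport.
Proof.
  move=> x s ev g /=; apply: transport_valE.
  apply: (lim_eval hop hK ev (abs_level_clopen hop hL g)) => y; exact: abs_ge0.
Qed.

Lemma transport_strip s g a b : a < transport_val s g < b ->
  exists W, ufilter s W /\ forall s', ufilter s' W -> a < transport_val s' g < b.
Proof.
  move=> [av vb]; set v := transport_val s g in av vb *.
  have mid : (a + v) / 2 < v < (v + b) / 2 by lra.
  have [W [uW Wv]] := lim_in_interval (transport_lim s g) mid.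
  exists W; split=> // s' uW'.
  suff : (a + v) / 2 <= transport_val s' g <= (v + b) / 2 by lra.
  apply: (lim_between (transport_lim s' g)); exists W; split=> // x /Wv; lra.
Qed.

Lemma transport_strips s l : Forall (strip (transport s)) l ->
  exists l', Forall (strip s) l' /\
    forall s', Forall (strip s') l' -> Forall (strip (transport s')) l.
Proof.
  elim: l => [|[[g a] b] l IHl] sl; first by exists nil.
  move/Forall_cons_iff: sl => [/transport_strip [W [uW Wab]] /IHl [l' [sl' l'l]]].
  have [h hW] := indicator_exists hop hK (ufilter_clopen hK uW).
  exists ((h, 1/2, 2) :: l'); split.
  - by constructor; [exact/(ufilter_strip s hW) | exact: sl'].
  - move=> s' /Forall_cons_iff [/(ufilter_strip s' hW) uW' sl'2].
    by constructor; [exact: Wab | exact: l'l].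
Qed.

Lemma transport_continuous : bsc_continuous transport.
Proof.
  move=> U oU s Us; have [l [sl lU]] := oU _ Us.
  have [l' [sl' l'l]] := transport_strips sl.
  by exists l'; split=> // t /l'l; exact: lU.
Qed.
End Transport.

(** Transporting back and forth is the identity, since all three points have
    the same filter and |f|_s is the limit of |f(x)| along it. *)
Lemma transport_involutive X (op : (X -> Prop) -> Prop) (hop : is_topology op)
    (K : fieldType) (absK : K -> R) (hK : is_nonarch_abs absK)
    (L : fieldType) (absL : L -> R) (hL : is_nonarch_abs absL) (s : BSC op absK) :
  transport hop hL hK (transport hop hK hL s) = s.
Proof.
  apply: bsc_eq => f /=; apply: transport_valE.
  by rewrite near_transport; exact (lim_bsc hop hK s f).
Qed.

Lemma transport_homeomorphism X (op : (X -> Prop) -> Prop) (hop : is_topology op)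
    (K : fieldType) (absK : K -> R) (hK : is_nonarch_abs absK)
    (L : fieldType) (absL : L -> R) (hL : is_nonarch_abs absL) :
  bsc_homeomorphism (transport hop hK hL).
Proof.
  exists (transport hop hL hK).
  split; first exact: transport_involutive.
  split; first exact: transport_involutive.
  by split; exact: transport_continuous.
Qed.

Section Density.
Variables (X : Type) (op : (X -> Prop) -> Prop).
Hypothesis hop : is_topology op.
Variables (K : fieldType) (abs : K -> R).
Hypothesis hK : is_nonarch_abs abs.

#[local] Instance near_proper_density (s : BSC op abs) : ProperFilter' (near s) :=
  near_proper hop hK s.
#[local] Instance near_filter_density (s : BSC op abs) : Filter (near s) :=
  filter_filter'.

Lemma eval_point x : is_bsc_point (fun f : Cbd op abs => abs (ap f x)).
Proof.
  split; first by move=> f; exact: abs_ge0.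
  split.
  { move=> f g h ->; apply: Rle_trans (abs_ultra hK _ _) _.
    by apply: Rmax_lub; have := abs_ge0 hK (ap f x); have := abs_ge0 hK (ap g x); lra. }
  split; first by move=> f g h ->; rewrite (absM hK).
  by split=> [c h ->|].
Qed.

Definition evp x : BSC op abs := exist _ _ (eval_point x).

Lemma evp_eval x : is_eval_at x (evp x).
Proof. by []. Qed.

(** Evaluation points are dense: every basic neighbourhood of [s] contains one,
    because its defining conditions hold eventually along [near s]. *)
Lemma eval_dense s l : Forall (strip s) l -> exists x, Forall (strip (evp x)) l.
Proof.
  suff : Forall (strip s) l -> near s (fun x => Forall (strip (evp x)) l).
  { by move=> near_l /near_l /(near_ex hK). }
  elim: l => [|[[f a] b] l IHl] sl; first by apply: (near_forall hop hK).
  move/Forall_cons_iff: sl => [fab /IHl near_l].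
  have near_f : near s (fun x => a < abs (ap f x) < b).
  { exact: lim_in_interval (lim_bsc hop hK s f) fab. }
  by apply: (near_imp (near_and hop hK near_f near_l)) => x [fx lx]; constructor.
Qed.
End Density.

Lemma strip_open X (op : (X -> Prop) -> Prop) (K : fieldType) (abs : K -> R)
    (g : Cbd op abs) a b : bsc_open (fun t : BSC op abs => a < ap t g < b).
Proof.
  move=> t gt; exists [:: (g, a, b)]; split; first by constructor.
  by move=> t' /Forall_cons_iff [].
Qed.

(** Continuous maps compatible with evaluations are unique, evaluation points
    being dense and the target Hausdorff. *)
Lemma eval_compatible_unique X (op : (X -> Prop) -> Prop) (hop : is_topology op)
    (K : fieldType) (absK : K -> R) (hK : is_nonarch_abs absK)
    (L : fieldType) (absL : L -> R) (phi1 phi2 : BSC op absK -> BSC op absL) :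
  bsc_continuous phi1 -> bsc_continuous phi2 ->
  eval_compatible phi1 -> eval_compatible phi2 -> forall s, phi1 s = phi2 s.
Proof.
  move=> cont1 cont2 ev1 ev2 s; apply: bsc_eq => g; apply: NNPP => neq.
  set u := ap (phi1 s) g in neq; set v := ap (phi2 s) g in neq.
  pose eps := Rabs (u - v) / 2.
  have eps0 : 0 < eps by have := Rabs_pos_lt (u - v) ltac:(lra); rewrite /eps; lra.
  have near_u : u - eps < u < u + eps by lra.
  have near_v : v - eps < v < v + eps by lra.
  have [l1 [sl1 l1u]] := cont1 _ (strip_open (g := g) (a := u - eps) (b := u + eps)) s near_u.
  have [l2 [sl2 l2v]] := cont2 _ (strip_open (g := g) (a := v - eps) (b := v + eps)) s near_v.
  have [x /Forall_app [xl1 xl2]] := eval_dense hop hK (proj2 (Forall_app _ _ _) (conj sl1 sl2)).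
  move: (l1u _ xl1) (l2v _ xl2).
  rewrite (ev1 x _ (evp_eval hK x)) (ev2 x _ (evp_eval hK x)) /eps.
  by move: (absL (ap g x)) => w; rewrite /Rabs; case: Rcase_abs; lra.
Qed.

Theorem mainTheorem17 :
  (forall (X : Type) (op : (X -> Prop) -> Prop)
          (K : fieldType) (absK : K -> R) (L : fieldType) (absL : L -> R),
      is_topology op ->
      complete_nonarch_field absK -> complete_nonarch_field absL ->
      exists phi : BSC op absK -> BSC op absL,
        (bsc_homeomorphism phi /\ eval_compatible phi) /\
        (forall phi' : BSC op absK -> BSC op absL,
            bsc_homeomorphism phi' -> eval_compatible phi' ->
            forall s, phi' s = phi s)) /\
  (forall (X : Type) (op : (X -> Prop) -> Prop)
          (k : fieldType) (absk : k -> R) (K : fieldType) (absK : K -> R)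
          (iota : {rmorphism k -> K}),
      is_topology op ->
      complete_nonarch_field absk -> complete_nonarch_field absK ->
      (forall c : k, absK (iota c) = absk c) ->
      exists phi : BSC op absK -> BSC op absk,
        bsc_homeomorphism phi /\
        (forall (s : BSC op absK) (f : Cbd op absk) (g : Cbd op absK),
            (forall x, proj1_sig g x = iota (proj1_sig f x)) ->
            proj1_sig (phi s) f = proj1_sig s g)).
Proof.
  split.
  - move=> X op K absK L absL hop [hK _] [hL _].
    exists (transport hop hK hL); split.
    + split; [exact: transport_homeomorphism | exact: transport_eval].
    + move=> phi' [_ [_ [_ [cont' _]]]] eval' s.
      apply: (eval_compatible_unique hop hK cont' _ eval' (transport_eval hop hK hL)).
      exact: transport_continuous.
  - move=> X op k absk K absK iota hop [hk _] [hK _] abs_iota.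
    exists (transport hop hK hk); split; first exact: transport_homeomorphism.
    by move=> s f g gf /=; apply: transport_val_abs => x; rewrite gf abs_iota.
Qed.
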